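(* Let $n\geq1$, $k\in\{1,\ldots,n\}$, $l\in\{1,\ldots,n\}$, and let $v=v_{l,\eta_k}+q(1,1)\in\mathbb N^2$ with $q\in\mathbb N$, $q\geq n-l+1+r_{l,\eta_k}$. Then $f_k(v)\geq f_k(u)$ for all $u\in T_{0,\eta_k}\cup\bigcup_{j=1}^l(T_{j,\eta_k}+r_{j,\eta_k}(1,1))$.
   Context: $f_k(v)=kv_1+(1-k)v_2$. $\Omega$ is the set of $\eta=(z,d_0,\ldots,d_r)$ with $z\in\{0,1\}$, $d_0=0$, $d_i\geq1$ ($1\leq i\leq r$), $\sum d_i=n$. For $j\in\{1,\ldots,n\}$, $t$ unique with $\sum_{i<t}d_i<j\leq\sum_{i\leq t}d_i$, $c=j-\sum_{i<t}d_i$; $v_{j,\eta}=(\sum_{i\text{ odd},i<t}d_i+c,0)$ if $z=1,t$ odd; $(0,\sum_{i\text{ even},i<t}d_i+c)$ if $z=1,t$ even; $(0,\sum_{i\text{ odd},i<t}d_i+c)$ if $z=0,t$ odd; $(\sum_{i\text{ even},i<t}d_i+c,0)$ if $z=0,t$ even. $T_{j,\eta}=\{v_{j,\eta}+p(1,1):0\leq p\leq n-j\}$, $T_{0,\eta}=\{(p,p):1\leq p\leq n\}$, $r_{j,\eta}=n\pi_2(v_{j,\eta})$, $T_{j,\eta}+r_{j,\eta}(1,1)=\{w+(r_{j,\eta},r_{j,\eta}):w\in T_{j,\eta}\}$. $\eta_k$: $z_k=1$ if $k\leq n+1-k$, else $0$; $d_{k,0}=0$; for $l\geq1$, $O_l=\sum_{j\text{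 odd},j\leq l-1}d_{k,j}$, $E_l=\sum_{j\text{ even},j\leq l-1}d_{k,j}$; $t_l=\max\{m\in\mathbb N:mk\leq(E_l+1)(n+1-k)\}$ ($z_k=1$, $l$ odd), $\max\{m:m(n+1-k)\leq(O_l+1)k\}$ ($z_k=1$, $l$ even), $\max\{m:m(n+1-k)\leq(E_l+1)k\}$ ($z_k=0$, $l$ odd), $\max\{m:mk\leq(O_l+1)(n+1-k)\}$ ($z_k=0$, $l$ even); $s_1=0$, $s_l=O_l$ (odd $l>1$), $s_l=E_l$ (even $l$); $d_{k,l}=\min\{n-\sum_{j<l}d_{k,j},t_l-s_l\}$, stopping at first $r$ with $\sum_{j\leq r}d_{k,j}=n$; $\eta_k=(z_k,d_{k,0},\ldots,d_{k,r})\in\Omega$. *)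

From mathcomp Require Import all_boot all_order all_algebra.
Set Implicit Arguments. Unset Strict Implicit. Unset Printing Implicit Defensive.
Import GRing.Theory Num.Theory.

(* An element eta = (z, d_0, d_1, ..., d_r) of Omega is represented by the
   pair (z, ds) with z : bool (true <-> z = 1) and ds = [:: d_1; ...; d_r];
   the entry d_0 = 0 is implicit. *)

Definition eta_t := (bool * seq nat)%type.

Definition in_Omega (n : nat) (eta : eta_t) : Prop :=
  all (fun d => 0 < d) eta.2 /\ sumn eta.2 = n.

Definition fk (k : nat) (v : nat * nat) : int :=
  (k%:Z * (v.1)%:Z + (1 - k%:Z) * (v.2)%:Z)%R.

Definition dd (ds : seq nat) (i : nat) : nat := if i is i'.+1 then nth 0 ds i' else 0.

Definition osum (ds : seq nat) (t : nat) : nat := sumn [seq dd ds i | i <- iota 0 t & odd i].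
Definition esum (ds : seq nat) (t : nat) : nat := sumn [seq dd ds i | i <- iota 0 t & ~~ odd i].

Definition psum (ds : seq nat) (t : nat) : nat := sumn [seq dd ds i | i <- iota 0 t.+1].

(* the index t with sum_{i<t} d_i < j <= sum_{i<=t} d_i : the least t >= 1
   with j <= sum_{i<=t} d_i *)
Definition tidx (ds : seq nat) (j : nat) : nat :=
  (find (fun t => j <= psum ds t) (iota 1 (size ds))).+1.

Definition vv (j : nat) (eta : eta_t) : nat * nat :=
  let ds := eta.2 in
  let t := tidx ds j in
  let c := j - psum ds t.-1 in
  if eta.1 then
    (if odd t then (osum ds t + c, 0) else (0, esum ds t + c))
  else
    (if odd t then (0, osum ds t + c) else (esum ds t + c, 0)).

Definition rr (n j : nat) (eta : eta_t) : nat := n * (vv j eta).2.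

Definition vadd (v w : nat * nat) : nat * nat := (v.1 + w.1, v.2 + w.2).

Definition inT (n j : nat) (eta : eta_t) (u : nat * nat) : Prop :=
  exists p, p <= n - j /\ u = vadd (vv j eta) (p, p).

Definition inT0 (n : nat) (u : nat * nat) : Prop :=
  exists p, 1 <= p <= n /\ u = (p, p).

Definition inTshift (n j : nat) (eta : eta_t) (u : nat * nat) : Prop :=
  exists w, inT n j eta w /\ u = vadd w (rr n j eta, rr n j eta).

(* max { m in N : m * a <= b }  (used with a >= 1, so m <= b) *)
Definition maxm (a b : nat) : nat := foldr maxn 0 [seq m <- iota 0 b.+1 | m * a <= b].

(* Construction of eta_k.  acc = [:: d_{k,1}; ...; d_{k,l-1}]. *)
Definition next_d (n k : nat) (z : bool) (acc : seq nat) : nat :=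
  let l := (size acc).+1 in
  let O := osum acc l in
  let E := esum acc l in
  let t := if z then
             (if odd l then maxm k ((E + 1) * (n + 1 - k))
              else maxm (n + 1 - k) ((O + 1) * k))
           else
             (if odd l then maxm (n + 1 - k) ((E + 1) * k)
              else maxm k ((O + 1) * (n + 1 - k))) in
  let s := if l == 1 then 0 else if odd l then O else E in
  minn (n - sumn acc) (t - s).

(* iterate, stopping at the first r with sum_{j<=r} d_{k,j} = n
   (fuel n suffices since each d_{k,l} >= 1) *)
Fixpoint build (n k : nat) (z : bool) (fuel : nat) (acc : seq nat) : seq nat :=
  if fuel is fuel'.+1 then
    if sumn acc == n then acc
    else build n k z fuel' (rcons acc (next_d n k z acc))
  else acc.

Definition eta_k (n k : nat) : eta_t :=
  let z := k <= n + 1 - k in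
  (z, build n k z n [::]).

(* Write g(v) = k v_1 + (n + 1 - k) v_2.  Since r_{j,eta} = n v_{j,2}, the points
   of T_{j,eta} + r_{j,eta}(1,1) have f_k-value g(v_{j,eta}) + p with p <= n - j,
   those of T_{0,eta} have f_k-value at most n, and f_k(v) >= g(v_{l,eta}) + n - l + 1.
   So it suffices that g(v_{j,eta_k}) + (l - j) <= g(v_{l,eta_k}) + 1.  Inside a
   block, g(v_j) grows at each step by the weight of the block (k or n + 1 - k,
   alternately), and the greedy choice of d_{k,l} is exactly what keeps g
   nondecreasing across block boundaries.  Once there are two blocks all weights are
   at least 2, so g grows by at least 2 over any two consecutive steps. *)

From mathcomp Require Import all_boot all_order all_algebra.
Import GRing.Theory Num.Theory.
From mathcomp Require Import zify.

Set Implicit Arguments.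
Unset Strict Implicit.
Unset Printing Implicit Defensive.

Lemma maxmE a b : 0 < a -> maxm a b = b %/ a.
Proof.
move=> a_gt0; rewrite /maxm foldrE big_filter; apply/eqP; rewrite eqn_leq.
apply/andP; split.
  by apply/bigmax_leqP_seq => m _; rewrite leq_divRL.
apply: (leq_bigmax_seq (F := id)); last exact: leq_divM.
by rewrite mem_iota ltnS leq_div.
Qed.

Lemma iota0S t : iota 0 t.+1 = iota 0 t ++ [:: t].
Proof. by rewrite -addn1 iotaD. Qed.

Lemma osumS ds t : osum ds t.+1 = osum ds t + (if odd t then dd ds t else 0).
Proof.
rewrite /osum iota0S filter_cat map_cat sumn_cat /=.
by case: (odd t); rewrite /= ?addn0.
Qed.

Lemma esumS ds t : esum ds t.+1 = esum ds t + (if odd t then 0 else dd ds t).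
Proof.
rewrite /esum iota0S filter_cat map_cat sumn_cat /=.
by case: (odd t); rewrite /= ?addn0.
Qed.

Definition parsum (ds : seq nat) (t : nat) : nat := if odd t then osum ds t else esum ds t.

Lemma parsumSS ds t : parsum ds t.+2 = parsum ds t + dd ds t.
Proof.
rewrite /parsum /= negbK !osumS !esumS /=.
by case: (odd t); rewrite /= !addn0.
Qed.

Lemma parsumS ds t : parsum ds t.+1 = if odd t then esum ds t else osum ds t.
Proof. by rewrite /parsum /= osumS esumS; case: (odd t); rewrite /= addn0. Qed.

Lemma dd_rcons acc x i : i <= size acc -> dd (rcons acc x) i = dd acc i.
Proof. by case: i => //= i i_lt; rewrite nth_rcons i_lt. Qed.

Lemma dd_rcons_last acc x : dd (rcons acc x) (size acc).+1 = x.
Proof. by rewrite /= nth_rcons ltnn eqxx. Qed.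

Lemma dd_gt0 ds t : all (fun d => 0 < d) ds -> t < size ds -> 0 < dd ds t.+1.
Proof. by move=> /allP ds_pos t_lt; apply/ds_pos/mem_nth. Qed.

(* [parsum _ t] only involves d_i with i <= t - 2, hence the bound size acc + 2. *)
Lemma parsum_rcons acc x t : t <= (size acc).+2 -> parsum (rcons acc x) t = parsum acc t.
Proof.
elim/ltn_ind: t => t IH; case: t IH => [|[|t]] IH t_le //.
by rewrite !parsumSS IH ?dd_rcons // ltnW // ltnW.
Qed.

Lemma psumS ds t : psum ds t.+1 = psum ds t + dd ds t.+1.
Proof. by rewrite /psum iota0S map_cat sumn_cat /= addn0. Qed.

Lemma psum_pred ds t : 0 < t -> psum ds t = psum ds t.-1 + dd ds t.
Proof. by case: t => // t _; rewrite psumS. Qed.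

Lemma psum_take ds t : psum ds t = sumn (take t ds).
Proof.
elim: t => [|t IH]; first by rewrite take0.
rewrite psumS IH /=; case: (ltnP t (size ds)) => t_lt.
  by rewrite (take_nth 0 t_lt) sumn_rcons.
by rewrite nth_default // !take_oversize ?addn0 // (leq_trans t_lt).
Qed.

Lemma psum_size ds : psum ds (size ds) = sumn ds.
Proof. by rewrite psum_take take_size. Qed.

Lemma psum_mono ds : {homo psum ds : a b / a <= b}.
Proof.
move=> a b /subnK <-; rewrite addnC !psum_take takeD sumn_cat.
exact: leq_addr.
Qed.

Lemma tidx_spec ds j : 0 < j <= sumn ds ->
  0 < tidx ds j <= size ds /\ psum ds (tidx ds j).-1 < j <= psum ds (tidx ds j).
Proof.
case/andP=> j_gt0 j_le.
have size_gt0 : 0 < size ds.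
  by case: ds j_le => //=; rewrite leqn0 => /eqP j0; rewrite j0 in j_gt0.
rewrite /tidx; set P := fun t => j <= psum ds t.
have has_P : has P (iota 1 (size ds)).
  apply/hasP; exists (size ds); last by rewrite /P psum_size.
  by rewrite mem_iota size_gt0 add1n ltnSn.
have := has_P; rewrite has_find size_iota => find_lt.
have j_le_find : j <= psum ds (find P (iota 1 (size ds))).+1.
  by have := nth_find 0 has_P; rewrite nth_iota // add1n.
split; first exact: find_lt.
rewrite j_le_find andbT.
case E: (find P _) => [|i] //=.
have := before_find 0 (_ : i < find P (iota 1 (size ds))); rewrite E => /(_ (ltnSn i)).
rewrite nth_iota; last by rewrite E in find_lt; apply: ltnW.
by rewrite /P add1n => /negbT; rewrite -ltnNge.
Qed.

Lemma tidx_eq ds j t : 0 < t -> psum ds t.-1 < j <= psum ds t -> j <= sumn ds ->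
  tidx ds j = t.
Proof.
move=> t_gt0 /andP [lo hi] j_le.
have j_range : 0 < j <= sumn ds by rewrite j_le andbT (leq_ltn_trans _ lo).
have [/andP [tj_gt0 _] /andP [lo' hi']] := tidx_spec j_range.
case: (ltngtP (tidx ds j) t) => // [tj_lt | tj_gt].
- have : psum ds (tidx ds j) <= psum ds t.-1 by apply: psum_mono; lia.
  lia.
- have : psum ds t <= psum ds (tidx ds j).-1 by apply: psum_mono; lia.
  lia.
Qed.

Lemma vvE z ds j : vv j (z, ds) =
  let t := tidx ds j in let s := parsum ds t + (j - psum ds t.-1) in
  if z == odd t then (s, 0) else (0, s).
Proof. by rewrite /vv /parsum /=; case: z; case: (odd _). Qed.

Section Levels.

Variables (ds : seq nat) (w : nat -> nat).
Hypothesis ds_pos : all (fun d => 0 < d) ds.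
Hypothesis w_gt0 : forall t, 0 < w t.
Hypothesis wSS : forall t, w t.+2 = w t.
Hypothesis w_gt1 : 1 < size ds -> forall t, 1 < w t.
Hypothesis w_boundary : forall t, 0 < t < size ds ->
  w t * (parsum ds t + dd ds t) <= w t.+1 * (parsum ds t.+1 + 1).

(* For [w = weight n k z] this is k v_1 + (n + 1 - k) v_2 at v = v_{j,(z,ds)}:
   position j lies in block t = tidx ds j, at offset j - psum ds t.-1. *)
Definition level (j : nat) : nat :=
  w (tidx ds j) * (parsum ds (tidx ds j) + (j - psum ds (tidx ds j).-1)).

Lemma level_gt0 j : 0 < j <= sumn ds -> 0 < level j.
Proof.
move=> j_range; have [_ /andP [lo _]] := tidx_spec j_range.
by rewrite /level muln_gt0 w_gt0 addn_gt0 subn_gt0 lo orbT.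
Qed.

Lemma level_succ i : 0 < i < sumn ds ->
  let t := tidx ds i in
  (tidx ds i.+1 = t /\ level i.+1 = level i + w t) \/
  [/\ tidx ds i.+1 = t.+1, 0 < t < size ds,
      level i = w t * (parsum ds t + dd ds t) &
      level i.+1 = w t.+1 * (parsum ds t.+1 + 1)].
Proof.
case/andP=> i_gt0 i_lt t.
have i_range : 0 < i <= sumn ds by rewrite i_gt0 ltnW.
have [/andP [t_gt0 t_le] /andP [lo hi]] := tidx_spec i_range.
rewrite -/t in t_gt0 t_le lo hi.
have t_pred := psum_pred ds t_gt0.
case: (ltnP i (psum ds t)) => [i_lt_end | i_ge_end].
  have tS : tidx ds i.+1 = t by apply: tidx_eq => //; rewrite i_lt_end ltnW.
  left; split=> //; rewrite /level tS -/t; nia.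
have i_end : i = psum ds t by apply/eqP; rewrite eqn_leq hi.
have t_lt : t < size ds.
  rewrite ltn_neqAle t_le andbT; apply/eqP => t_size.
  by move: i_lt; rewrite -psum_size -t_size -i_end ltnn.
have d_gt0 : 0 < dd ds t.+1 := dd_gt0 ds_pos t_lt.
have tS : tidx ds i.+1 = t.+1.
  by apply: tidx_eq => //=; rewrite psumS -i_end ltnSn -addn1 leq_add2l.
right; split=> //.
  by rewrite /level -/t [X in X - _]i_end t_pred addKn.
by rewrite /level tS /= i_end subSnn.
Qed.

Lemma level_leS i : 0 < i < sumn ds -> level i <= level i.+1.
Proof.
move=> i_range.
case: (level_succ i_range) => [[_ ->] | [_ t_range -> ->]]; first exact: leq_addr.
exact: w_boundary.
Qed.

Lemma level_addSS i : 0 < i -> i.+2 <= sumn ds -> level i + 2 <= level i.+2.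
Proof.
move=> i_gt0 i_le.
have i_range : 0 < i < sumn ds by rewrite i_gt0 ltnW.
have iS_range : 0 < i.+1 < sumn ds by [].
have le1 := level_leS i_range; have le2 := level_leS iS_range.
case: (level_succ i_range) => [[E1 L1] | [E1 /andP [t_gt0 t_lt] L0 _]].
  case: (level_succ iS_range) => [[_ L2] | [_ /andP [t'_gt0 t'_lt] _ _]].
    rewrite L2 L1 -addnA leq_add2l.
    by have := w_gt0 (tidx ds i); have := w_gt0 (tidx ds i.+1); lia.
  have := w_gt1 (leq_ltn_trans t'_gt0 t'_lt) (tidx ds i); lia.
have w_big := w_gt1 (leq_ltn_trans t_gt0 t_lt).
case: (level_succ iS_range) => [[_ L2] | [_ _ _ L2]].
  by have := w_big (tidx ds i.+1); lia.
move: L2; rewrite E1 wSS parsumSS => ->; rewrite L0 addn1 mulnS addnC leq_add2r.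
exact: w_big.
Qed.

Lemma level_add j m : 0 < j -> j + m <= sumn ds -> level j + m <= level (j + m) + 1.
Proof.
elim/ltn_ind: m j => m IH j j_gt0 jm_le.
case: m IH jm_le => [|[|m]] IH jm_le.
- by rewrite !addn0 leq_addr.
- by rewrite !addn1 ltnS; apply: level_leS; rewrite j_gt0 -addn1.
- have := IH m (ltnW (ltnSn _)) j.+2 isT; rewrite !addSnnS => /(_ jm_le).
  have j2_le : j.+2 <= sumn ds by lia.
  have := level_addSS j_gt0 j2_le; lia.
Qed.

Lemma level_lower l : 0 < l <= sumn ds -> l <= level l + 1.
Proof.
case/andP=> l_gt0 l_le.
have := @level_add 1 l.-1 isT; rewrite add1n prednK // => /(_ l_le).
have := @level_gt0 1; rewrite (leq_trans l_gt0 l_le) => /(_ isT); lia.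
Qed.

End Levels.

Section Construction.

Variables (n k : nat) (z : bool).

Definition weight (t : nat) : nat := if z == odd t then k else n + 1 - k.

Lemma weightSS t : weight t.+2 = weight t.
Proof. by rewrite /weight /= negbK. Qed.

Hypothesis k_range : 1 <= k <= n.

Lemma weight_gt0 t : 0 < weight t.
Proof. by rewrite /weight; case: ifP => _; lia. Qed.

Lemma next_dE acc :
  next_d n k z acc = minn (n - sumn acc)
    ((parsum acc (size acc).+2 + 1) * weight (size acc).+2 %/ weight (size acc).+1
     - parsum acc (size acc).+1).
Proof.
have k_gt0 : 0 < k by case/andP: k_range.
have k'_gt0 : 0 < n + 1 - k by lia.
rewrite /next_d /weight parsumS /parsum /=.
case: (size acc) => [|s]; case: z; rewrite /= ?negbK; try case: (odd s).
all: by rewrite /= ?maxmE.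
Qed.

(* [prefix_room] says that a block of length one would satisfy the boundary
   inequality; it is what makes the next greedy block nonempty. *)
Record greedy_prefix (acc : seq nat) : Prop := GreedyPrefix {
  prefix_gt0 : all (fun d => 0 < d) acc;
  prefix_sum : sumn acc <= n;
  prefix_boundary : forall t, 0 < t <= size acc ->
    weight t * (parsum acc t + dd acc t) <= weight t.+1 * (parsum acc t.+1 + 1);
  prefix_room : sumn acc < n ->
    weight (size acc).+1 * (parsum acc (size acc).+1 + 1) <=
    weight (size acc).+2 * (parsum acc (size acc).+2 + 1) }.

Lemma greedy_prefix_nil : z = (k <= n + 1 - k) -> greedy_prefix [::].
Proof.
move=> z_def; split=> //; first by case.
rewrite /weight z_def /parsum /osum /esum /=.
by case: (leqP k (n + 1 - k)) => /= k_le _; lia.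
Qed.

Lemma greedy_prefix_rcons acc : greedy_prefix acc -> sumn acc < n ->
  greedy_prefix (rcons acc (next_d n k z acc)) /\ 0 < next_d n k z acc.
Proof.
case=> acc_gt0 acc_sum acc_boundary acc_room sum_lt.
have := next_dE acc; set l := (size acc).+1.
set S := parsum acc l; set O := parsum acc l.+1.
set T := (O + 1) * weight l.+1 %/ weight l.
set x := next_d n k z acc => x_def.
have W_gt0 := weight_gt0 l.
have S_lt_T : S < T.
  by rewrite leq_divRL // mulnC -addn1 (mulnC (O + 1)); apply: acc_room.
have T_le : T * weight l <= (O + 1) * weight l.+1 := leq_divM _ _.
have T_max : (O + 1) * weight l.+1 < T.+1 * weight l := ltn_ceil _ W_gt0.
have x_gt0 : 0 < x by rewrite x_def; lia.
have Sx_le : S + x <= T by rewrite x_def; lia.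
have parsum_acc' t : t <= l.+1 -> parsum (rcons acc x) t = parsum acc t.
  exact: parsum_rcons.
split=> //; split.
- by rewrite all_rcons x_gt0.
- by rewrite sumn_rcons x_def; lia.
- move=> t; rewrite size_rcons -/l => /andP [t_gt0]; rewrite leq_eqVlt.
  case/orP=> [/eqP -> | t_lt].
    rewrite !parsum_acc' // dd_rcons_last -/S -/O.
    have : weight l * (S + x) <= T * weight l by rewrite mulnC leq_mul2r Sx_le orbT.
    lia.
  rewrite !parsum_acc' ?dd_rcons //; try lia.
  by apply: acc_boundary; rewrite t_gt0 -ltnS.
- rewrite sumn_rcons size_rcons -/l => sum'_lt.
  have x_eq : x = T - S by move: sum'_lt; rewrite x_def; lia.
  rewrite parsumSS !parsum_acc' // dd_rcons_last -/S -/O weightSS.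
  have -> : S + x = T by lia.
  lia.
Qed.

Lemma build_greedy fuel acc : greedy_prefix acc -> n <= sumn acc + fuel ->
  greedy_prefix (build n k z fuel acc) /\ sumn (build n k z fuel acc) = n.
Proof.
elim: fuel acc => [|fuel IH] acc acc_ok fuel_ge /=.
  by have := prefix_sum acc_ok; split=> //; lia.
case: eqP => [// | /eqP sum_ne].
have sum_lt : sumn acc < n by rewrite ltn_neqAle sum_ne prefix_sum.
have [acc'_ok x_gt0] := greedy_prefix_rcons acc_ok sum_lt.
by apply: IH => //; rewrite sumn_rcons; lia.
Qed.

Lemma next_d_nil_degenerate : z = (k <= n + 1 - k) -> (k == 1) || (n + 1 - k == 1) ->
  next_d n k z [::] = n.
Proof.
move=> z_def k_extreme.
have [W1 W2] : weight 1 = 1 /\ weight 2 = n.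
  by rewrite /weight z_def /=; case: (leqP k (n + 1 - k)) => /= k_le; case/orP: k_extreme => /eqP; lia.
by rewrite next_dE /= W1 W2 divn1 /parsum /osum /esum /= !subn0 mul1n minnn.
Qed.

End Construction.

Lemma eta_k_greedy n k : 1 <= k <= n ->
  greedy_prefix n k (eta_k n k).1 (eta_k n k).2 /\ sumn (eta_k n k).2 = n.
Proof.
by move=> k_range; apply: build_greedy => //; apply: greedy_prefix_nil.
Qed.

Lemma eta_k_in_Omega n k : 1 <= k <= n -> in_Omega n (eta_k n k).
Proof. by move=> /eta_k_greedy [[]]. Qed.

Lemma eta_k_degenerate n k : 1 <= k <= n -> (k == 1) || (n + 1 - k == 1) ->
  (eta_k n k).2 = [:: n].
Proof.
move=> k_range k_extreme.
have n_gt0 : 0 < n by case/andP: k_range; apply: leq_trans.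
have := next_d_nil_degenerate k_range erefl k_extreme; rewrite /eta_k /=.
by case: n {k_range k_extreme} n_gt0 => [|[|n]] //= _ -> //=; rewrite addn0 eqxx.
Qed.

Lemma eta_k_weight_gt1 n k : 1 <= k <= n -> 1 < size (eta_k n k).2 ->
  forall t, 1 < weight n k (eta_k n k).1 t.
Proof.
move=> k_range size_gt1 t.
case: (boolP ((k == 1) || (n + 1 - k == 1))) => [/(eta_k_degenerate k_range) eta1 | ].
  by rewrite eta1 in size_gt1.
by rewrite negb_or /weight => /andP [k_ne1 k'_ne1]; case: ifP => _; lia.
Qed.

Lemma eta_k_boundary n k : 1 <= k <= n -> forall t, 0 < t < size (eta_k n k).2 ->
  let w := weight n k (eta_k n k).1 in let ds := (eta_k n k).2 in
  w t * (parsum ds t + dd ds t) <= w t.+1 * (parsum ds t.+1 + 1).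
Proof.
move=> /eta_k_greedy [[_ _ boundary _] _] t /andP [t_gt0 t_lt].
by apply: boundary; rewrite t_gt0 ltnW.
Qed.

Lemma fk_vadd_diag k v p : fk k (vadd v (p, p)) = (fk k v + p%:Z)%R.
Proof. rewrite /fk /=; lia. Qed.

Lemma fk_diag k p : (fk k (p, p) = p%:Z)%R.
Proof. rewrite /fk /=; lia. Qed.

Lemma fk_vv_add_rr n k z ds j : k <= n + 1 ->
  (fk k (vv j (z, ds)) + (rr n j (z, ds))%:Z = (level ds (weight n k z) j)%:Z)%R.
Proof. by move=> k_le; rewrite /rr vvE /level /weight /fk; case: ifP => _ /=; nia. Qed.

Theorem lemma3p12 (n k l q : nat) :
  1 <= n -> 1 <= k <= n -> 1 <= l <= n ->
  n - l + 1 + rr n l (eta_k n k) <= q ->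
  forall u : nat * nat,
    (inT0 n u \/ exists j, 1 <= j <= l /\ inTshift n j (eta_k n k) u) ->
    (fk k u <= fk k (vadd (vv l (eta_k n k)) (q, q)))%R.
Proof.
move=> _ k_range /andP [l_gt0 l_le] q_ge u u_in.
have [ds_pos ds_sum] := eta_k_in_Omega k_range.
have boundary := eta_k_boundary k_range.
have w_gt1 := eta_k_weight_gt1 k_range.
case: (eta_k n k) ds_pos ds_sum boundary w_gt1 q_ge u_in.
move=> z ds /= ds_pos ds_sum boundary w_gt1 q_ge u_in.
have w_gt0 := weight_gt0 z k_range; have wSS := @weightSS n k z.
have k_le : k <= n + 1 by lia.
have value j := @fk_vv_add_rr n k z ds j k_le.
have l_lower : l <= level ds (weight n k z) l + 1.
  by apply: (level_lower ds_pos w_gt0 wSS w_gt1 boundary); rewrite l_gt0 ds_sum.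
have := value l; rewrite fk_vadd_diag.
case: u_in => [[p [/andP [_ p_le] ->]] | [j [/andP [j_gt0 j_le] [_ [[p [p_le ->]] ->]]]]].
  rewrite fk_diag; lia.
have := level_add ds_pos w_gt0 wSS w_gt1 boundary j_gt0 (_ : j + (l - j) <= sumn ds).
rewrite subnKC // ds_sum => /(_ l_le).
rewrite !fk_vadd_diag; have := value j; lia.
Qed.
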